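(* Let $(\mathfrak{g},[\cdot,\ldots,\cdot],\varepsilon,\alpha)$ be an $n$-Hom-Lie color algebra with $n\geq3$, let $p$ be a positive integer with $p<n$, and let $a_1,\ldots,a_p\in\mathfrak{g}_0$ satisfy $\alpha(a_i)=a_i$ for all $i\in\{1,\ldots,p\}$. Then $(\mathfrak{g},\{\cdot,\ldots,\cdot\},\varepsilon,\alpha)$ is an $(n-p)$-Hom-Lie color algebra, where $\{x_1,\ldots,x_{n-p}\}=[a_1,\ldots,a_p,x_1,\ldots,x_{n-p}]$ for all $x_1,\ldots,x_{n-p}\in\mathfrak{g}$.
   Context: $\mathbb{K}$ is a field of characteristic zero and $\Gamma$ an abelian group with neutral element $0$; $\mathfrak{g}_0$ is the degree-$0$ component. A bicharacter is a map $\varepsilon:\Gamma\times\Gamma\to\mathbb{K}\setminus\{0\}$ with $\varepsilon(a,b)\varepsilon(b,a)=1$, $\varepsilon(a,b+c)=\varepsilon(a,b)\varepsilon(a,c)$, $\varepsilon(a+b,c)=\varepsilon(a,c)\varepsilon(b,c)$. For homogeneous $x,y$, $\varepsilon(x,y)=\varepsilon(|x|,|y|)$ and $\varepsilon(x,y_1+\dots+y_k)=\varepsilon(|x|,|y_1|+\dots+|y_k|)$ ($=1$ for an empty sum). An $m$-Hom-Lie color algebra $(\mathfrak{g},[\cdot,\ldots,\cdot],\varepsilon,\alpha)$ is a $\Gamma$-graded vector space with an $m$-linear bracket of degree zero, a bicharacter $\varepsilon$ and a degree-zero linear map $\alpha$ such that for homogeneous elements: (i) $[x_1,\ldots,x_i,x_{i+1},\ldots,x_m]=-\varepsilon(x_i,x_{i+1})[x_1,\ldots,x_{i+1},x_i,\ldots,x_m]$;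 (ii) $[\alpha(x_1),\ldots,\alpha(x_{m-1}),[y_1,\ldots,y_m]]=\sum_{i=1}^m\varepsilon(x_1+\dots+x_{m-1},y_1+\dots+y_{i-1})[\alpha(y_1),\ldots,\alpha(y_{i-1}),[x_1,\ldots,x_{m-1},y_i],\alpha(y_{i+1}),\ldots,\alpha(y_m)]$. *)

From HB Require Import structures.
From mathcomp Require Import all_boot all_order all_algebra.
Set Implicit Arguments. Unset Strict Implicit. Unset Printing Implicit Defensive.
Import GRing.Theory.
Local Open Scope ring_scope.

(* Conventions:
   - Gamma is an abelian group, modelled as a zmodType G.
   - The Gamma-graded vector space g is a K-module V together with the family
     gr : G -> {pred V} of homogeneous components g_a, which are subspaces and
     whose sum is direct and equal to V.
   - An m-ary bracket is a function br : seq V -> V; only its values on lists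
     of size m matter.
   - Statements about homogeneous elements take, along with a list xs of
     elements, a list ds of degrees with xs_i in g_(ds_i). *)

Section Defs.
Variables (K : fieldType) (G : zmodType) (V : lmodType K).

Definition subspace (P : {pred V}) : Prop :=
  0 \in P /\ forall (k : K) (u v : V), u \in P -> v \in P -> k *: u + v \in P.

Definition graded_space (gr : G -> {pred V}) : Prop :=
  [/\ forall a, subspace (gr a),
      (forall v : V, exists (s : seq G) (f : G -> V),
          [/\ uniq s, forall a, f a \in gr a & v = \sum_(a <- s) f a])
    & (forall (s : seq G) (f : G -> V), uniq s -> (forall a, f a \in gr a) ->
          \sum_(a <- s) f a = 0 -> forall a, a \in s -> f a = 0)].

Definition bicharacter (eps : G -> G -> K) : Prop :=
  [/\ forall a b, eps a b != 0,
      forall a b, eps a b * eps b a = 1,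
      forall a b c, eps a (b + c) = eps a b * eps a c
    & forall a b c, eps (a + b) c = eps a c * eps b c].

Definition homs (gr : G -> {pred V}) (ds : seq G) (xs : seq V) : Prop :=
  size ds = size xs /\ forall i, (i < size xs)%N -> nth 0 xs i \in gr (nth 0 ds i).

Definition degsum (ds : seq G) : G := \sum_(d <- ds) d.

Definition swap_adj (s : seq V) (i : nat) : seq V :=
  set_nth 0 (set_nth 0 s i (nth 0 s i.+1)) i.+1 (nth 0 s i).

Definition HomLieColor (m : nat) (gr : G -> {pred V}) (br : seq V -> V)
    (eps : G -> G -> K) (alpha : V -> V) : Prop :=
  graded_space gr /\ bicharacter eps /\
      (forall (k : K) (u v : V), alpha (k *: u + v) = k *: alpha u + alpha v) /\
      (forall a v, v \in gr a -> alpha v \in gr a) /\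
      (forall (s : seq V) (i : nat) (k : K) (u v : V), size s = m -> (i < m)%N ->
          br (set_nth 0 s i (k *: u + v))
          = k *: br (set_nth 0 s i u) + br (set_nth 0 s i v)) /\
      (forall ds xs, homs gr ds xs -> size xs = m -> br xs \in gr (degsum ds)) /\
      (forall ds xs (i : nat), homs gr ds xs -> size xs = m -> (i.+1 < m)%N ->
          br xs = - (eps (nth 0 ds i) (nth 0 ds i.+1) *: br (swap_adj xs i))) /\
      (forall dx xs dy ys, homs gr dx xs -> homs gr dy ys ->
          size xs = m.-1 -> size ys = m ->
          br (map alpha xs ++ [:: br ys])
          = \sum_(i < m) eps (degsum dx) (degsum (take i dy)) *:
              br (map alpha (take i ys) ++ br (rcons xs (nth 0 ys i))
                    :: map alpha (drop i.+1 ys))).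

End Defs.

From HB Require Import structures.
From mathcomp Require Import all_boot all_order all_algebra.
From mathcomp Require Import zify.
Set Implicit Arguments. Unset Strict Implicit. Unset Printing Implicit Defensive.
Import GRing.Theory.

(* Multilinearity, degree and skew-symmetry are inherited slot
   by slot, since the a_i have degree 0 and so affect neither degrees nor signs.  For
   the Hom-Nambu identity, apply the n-ary identity to a ++ xs and a ++ ys; as
   alpha a_i = a_i, its left side is the left side of the (n-p)-ary identity, and so
   are the last n - p terms of its right side.  Each of the first p terms vanishes:
   its inner bracket contains a_i twice, in degree 0, hence is 0 by skew-symmetry
   (this is where 2 != 0 is used), and the outer bracket is linear in that slot. *)

Section SeqSurgery.
Variable T : Type.
Implicit Types (s : seq T) (y : T).

Lemma nth_cat_shift (x0 : T) (s1 s2 : seq T) k i :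
  size s1 = k -> nth x0 (s1 ++ s2) (k + i) = nth x0 s2 i.
Proof. by move<-; rewrite nth_cat ltnNge leq_addr addKn. Qed.

Lemma take_cat_shift (s1 s2 : seq T) k i :
  size s1 = k -> take (k + i) (s1 ++ s2) = s1 ++ take i s2.
Proof. by move<-; rewrite take_cat ltnNge leq_addr addKn. Qed.

Lemma drop_cat_shift (s1 s2 : seq T) k i :
  size s1 = k -> drop (k + i) (s1 ++ s2) = drop i s2.
Proof. by move<-; rewrite drop_cat ltnNge leq_addr addKn. Qed.

Lemma set_nth_cat_shift (x0 : T) (s1 s2 : seq T) i y :
  set_nth x0 (s1 ++ s2) (size s1 + i) y = s1 ++ set_nth x0 s2 i y.
Proof. by elim: s1 => //= x s1 ->. Qed.

Definition swap_nth (x0 : T) s i := set_nth x0 (set_nth x0 s i (nth x0 s i.+1)) i.+1 (nth x0 s i).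

Lemma nth_swap_nth (x0 : T) s i j :
  nth x0 (swap_nth x0 s i) j =
  if j == i then nth x0 s i.+1 else if j == i.+1 then nth x0 s i else nth x0 s j.
Proof.
rewrite !nth_set_nth /= nth_set_nth /=.
by case: (eqVneq j i.+1) => [->|_]; case: (eqVneq j i) => //; rewrite (gtn_eqF (ltnSn i)).
Qed.

Lemma size_swap_nth (x0 : T) s i : (i.+1 < size s)%N -> size (swap_nth x0 s i) = size s.
Proof. rewrite !size_set_nth; lia. Qed.

Lemma swap_nth_cat (x0 : T) (s1 s2 : seq T) i :
  swap_nth x0 (s1 ++ s2) (size s1 + i) = s1 ++ swap_nth x0 s2 i.
Proof. by rewrite /swap_nth -addnS !nth_cat_shift // !set_nth_cat_shift. Qed.

Lemma swap_nth_id (x0 : T) s i :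
  (i.+1 < size s)%N -> nth x0 s i = nth x0 s i.+1 -> swap_nth x0 s i = s.
Proof.
move=> lt_i eq_i; apply: (@eq_from_nth _ x0) => [|j _]; first exact: size_swap_nth.
by rewrite nth_swap_nth; case: eqP => [->|_] //; case: eqP => [->|_].
Qed.

End SeqSurgery.

Local Open Scope ring_scope.

Lemma swap_adjE (K : fieldType) (V : lmodType K) (s : seq V) i :
  swap_adj s i = swap_nth 0 s i.
Proof. by []. Qed.

Lemma bicharacter_r0 (K : fieldType) (G : zmodType) (eps : G -> G -> K) :
  bicharacter eps -> forall d, eps d 0 = 1.
Proof.
case=> eps_neq0 _ epsD _ d.
by apply: (mulfI (eps_neq0 d 0)); rewrite mulr1 -epsD addr0.
Qed.

Section Homogeneous.
Variables (K : fieldType) (G : zmodType) (V : lmodType K) (gr : G -> {pred V}).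

Lemma homs_cat ds1 xs1 ds2 xs2 :
  homs gr ds1 xs1 -> homs gr ds2 xs2 -> homs gr (ds1 ++ ds2) (xs1 ++ xs2).
Proof.
move=> [sz1 hom1] [sz2 hom2]; split; first by rewrite !size_cat sz1 sz2.
move=> i; rewrite size_cat !nth_cat sz1 => lt_i.
by case: ifP => [/hom1 //|/negbT]; rewrite -leqNgt => ge_i; apply: hom2; rewrite ltn_subLR.
Qed.

Lemma homs_rcons ds xs d x :
  homs gr ds xs -> x \in gr d -> homs gr (rcons ds d) (rcons xs x).
Proof. by move=> hom hx; rewrite -!cats1; apply: homs_cat => //; split=> // -[]. Qed.

Lemma homs_nseq0 (a : seq V) :
  (forall i, (i < size a)%N -> nth 0 a i \in gr 0) -> homs gr (nseq (size a) 0) a.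
Proof. by move=> a0; split=> [|i lt_i]; rewrite ?size_nseq ?nth_nseq ?lt_i ?a0. Qed.

Lemma homs_swap_nth ds xs i :
  homs gr ds xs -> (i.+1 < size xs)%N -> homs gr (swap_nth 0 ds i) (swap_nth 0 xs i).
Proof.
move=> [sz hom] lt_i; split; first by rewrite !size_swap_nth ?sz.
move=> j; rewrite size_swap_nth // => lt_j; rewrite !nth_swap_nth.
by case: ifP => _; [|case: ifP => _]; apply: hom; lia.
Qed.

Lemma degsum_nseq0_cat k (ds : seq G) : degsum (nseq k 0 ++ ds) = degsum ds.
Proof. by rewrite /degsum big_cat /= big_nseq iter_fix ?add0r. Qed.

End Homogeneous.

Section BracketAxioms.
Variables (K : fieldType) (G : zmodType) (V : lmodType K).
Variables (m : nat) (gr : G -> {pred V}) (br : seq V -> V).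
Variables (eps : G -> G -> K) (alpha : V -> V).

Definition multilinear_bracket : Prop :=
  forall (s : seq V) (i : nat) (k : K) (u v : V), size s = m -> (i < m)%N ->
    br (set_nth 0 s i (k *: u + v)) = k *: br (set_nth 0 s i u) + br (set_nth 0 s i v).

Definition graded_bracket : Prop :=
  forall ds xs, homs gr ds xs -> size xs = m -> br xs \in gr (degsum ds).

Definition skew_bracket : Prop :=
  forall ds xs (i : nat), homs gr ds xs -> size xs = m -> (i.+1 < m)%N ->
    br xs = - (eps (nth 0 ds i) (nth 0 ds i.+1) *: br (swap_adj xs i)).

Definition nambu_bracket : Prop :=
  forall dx xs dy ys, homs gr dx xs -> homs gr dy ys ->
    size xs = m.-1 -> size ys = m ->
    br (map alpha xs ++ [:: br ys])
    = \sum_(i < m) eps (degsum dx) (degsum (take i dy)) *: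
        br (map alpha (take i ys) ++ br (rcons xs (nth 0 ys i))
              :: map alpha (drop i.+1 ys)).

End BracketAxioms.

Section Vanishing.
Variables (K : fieldType) (G : zmodType) (V : lmodType K).
Variables (n : nat) (gr : G -> {pred V}) (br : seq V -> V) (eps : G -> G -> K).

Lemma multilinear_bracket_nth0 (s : seq V) j :
  multilinear_bracket n br -> size s = n -> (j < n)%N -> nth 0 s j = 0 -> br s = 0.
Proof.
move=> br_lin sz_s lt_j s_j.
have s_id : set_nth 0 s j 0 = s.
  by apply: (@eq_from_nth _ 0) => [|k _]; rewrite ?nth_set_nth /=;
    [rewrite size_set_nth sz_s; apply/maxn_idPr | case: eqP => [->|]].
by have := br_lin s j (-1) 0 0 sz_s lt_j; rewrite scaler0 add0r scaleN1r addNr s_id.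
Qed.

Lemma skew_bracket_repeat ds (s : seq V) d j k :
  (2%:R : K) != 0 -> skew_bracket n gr br eps -> eps d d = 1 ->
  homs gr ds s -> size s = n -> (j < k < n)%N ->
  nth 0 s j = nth 0 s k -> nth 0 ds j = d -> nth 0 ds k = d -> br s = 0.
Proof.
move=> two_neq0 br_skew eps_dd.
elim: k ds s => // k IHk ds s hom sz_s /andP[lt_jk lt_kn] s_jk ds_j ds_k.
have lt_k : (k.+1 < size s)%N by rewrite sz_s.
have [eq_jk|ne_jk] := eqVneq j k.
  subst j; have br_opp : br s = - br s.
    by rewrite {1}(br_skew _ _ k hom) // ds_j ds_k eps_dd scale1r swap_adjE swap_nth_id.
  have : (2%:R : K) *: br s = 0 by rewrite scaler_nat mulr2n {1}br_opp addNr.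
  by move/eqP; rewrite scaler_eq0 (negbTE two_neq0) => /eqP.
rewrite (br_skew _ _ k hom) // swap_adjE (IHk (swap_nth 0 ds k)) ?scaler0 ?oppr0 //.
- exact: homs_swap_nth.
- by rewrite size_swap_nth.
- by rewrite ltn_neqAle ne_jk -ltnS lt_jk ltnW.
- by rewrite !nth_swap_nth eqxx (negbTE ne_jk) (ltn_eqF lt_jk).
- by rewrite nth_swap_nth (negbTE ne_jk) (ltn_eqF lt_jk).
by rewrite nth_swap_nth eqxx.
Qed.

End Vanishing.

Section Prefix.
Variables (K : fieldType) (G : zmodType) (V : lmodType K).
Variables (n : nat) (gr : G -> {pred V}) (br : seq V -> V).
Variables (eps : G -> G -> K) (alpha : V -> V) (a : seq V).
Hypothesis a_deg0 : forall i, (i < size a)%N -> nth 0 a i \in gr 0.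

Let br_a (xs : seq V) := br (a ++ xs).
Let da := nseq (size a) (0 : G).

Lemma homs_prefix ds xs : homs gr ds xs -> homs gr (da ++ ds) (a ++ xs).
Proof. exact/homs_cat/homs_nseq0. Qed.

Lemma prefix_multilinear :
  multilinear_bracket n br -> multilinear_bracket (n - size a) br_a.
Proof.
move=> br_lin s i k u v sz_s lt_i; rewrite /br_a -!set_nth_cat_shift.
by apply: br_lin; rewrite ?size_cat; lia.
Qed.

Lemma prefix_graded :
  (size a <= n)%N -> graded_bracket n gr br -> graded_bracket (n - size a) gr br_a.
Proof.
move=> le_an br_gr ds xs hom sz_xs; rewrite -(degsum_nseq0_cat (size a)).
by apply: br_gr; [exact: homs_prefix | rewrite size_cat; lia].
Qed.

Lemma prefix_skew : skew_bracket n gr br eps -> skew_bracket (n - size a) gr br_a eps.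
Proof.
move=> br_skew ds xs i hom sz_xs lt_i.
rewrite /br_a swap_adjE -swap_nth_cat (br_skew (da ++ ds) _ (size a + i)%N).
- by rewrite -addnS !nth_cat_shift ?size_nseq.
- exact: homs_prefix.
- rewrite size_cat; lia.
- lia.
Qed.

Lemma prefix_nambu :
  (2%:R : K) != 0 -> (size a < n)%N ->
  (forall i, (i < size a)%N -> alpha (nth 0 a i) = nth 0 a i) ->
  bicharacter eps -> multilinear_bracket n br -> skew_bracket n gr br eps ->
  nambu_bracket n gr br eps alpha -> nambu_bracket (n - size a) gr br_a eps alpha.
Proof.
move=> two_neq0 lt_an a_fix eps_bi br_lin br_skew br_nambu dx xs dy ys hx hy sz_xs sz_ys.
have map_a : map alpha a = a.
  by apply: (@eq_from_nth _ 0) => [|i]; rewrite size_map // => lt_i; rewrite (nth_map 0) ?a_fix.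
have sz_axs : size (a ++ xs) = n.-1 by rewrite size_cat sz_xs; lia.
have sz_ays : size (a ++ ys) = n by rewrite size_cat sz_ys; lia.
have split_n : n = (size a + (n - size a))%N by lia.
rewrite /br_a -{1}map_a catA -map_cat (br_nambu _ _ _ _ (homs_prefix hx) (homs_prefix hy)) //.
rewrite [in X in X = _]split_n big_split_ord /= big1 ?add0r; last first.
  move=> [i lt_i] _ /=.
  have lt_i_axs : (i < size (a ++ xs))%N by rewrite size_cat ltn_addr.
  have inner_eq0 : br (rcons (a ++ xs) (nth 0 (a ++ ys) i)) = 0.
    rewrite nth_cat lt_i.
    apply: (skew_bracket_repeat (d := 0) (j := i) (k := size (a ++ xs)) two_neq0 br_skew).
    - exact: bicharacter_r0.
    - exact: homs_rcons (homs_prefix hx) (a_deg0 lt_i).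
    - by rewrite size_rcons sz_axs; lia.
    - by rewrite lt_i_axs sz_axs; lia.
    - by rewrite !nth_rcons ltnn eqxx lt_i_axs nth_cat lt_i.
    - by rewrite nth_rcons size_cat size_nseq ltn_addr // nth_cat size_nseq lt_i nth_nseq lt_i.
    - by rewrite nth_rcons !size_cat size_nseq hx.1 ltnn eqxx.
  have le_i_ays : (i <= size (a ++ ys))%N by rewrite size_cat ltnW ?ltn_addr.
  rewrite inner_eq0 (multilinear_bracket_nth0 (j := i) br_lin) ?scaler0 //.
  - by rewrite size_cat /= !size_map size_takel // size_drop sz_ays; lia.
  - lia.
  - by rewrite nth_cat size_map size_takel // ltnn subnn.
apply: eq_bigr => -[i lt_i] _ /=.
rewrite degsum_nseq0_cat take_cat_shift ?size_nseq // degsum_nseq0_cat.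
rewrite take_cat_shift // -addnS drop_cat_shift // nth_cat_shift //.
by rewrite map_cat map_a rcons_cat -catA.
Qed.

End Prefix.

Theorem corollary3p7 (K : fieldType) (G : zmodType) (V : lmodType K)
    (char0 : [pchar K] =i pred0)
    (n : nat) (gr : G -> {pred V}) (br : seq V -> V)
    (eps : G -> G -> K) (alpha : V -> V)
    (H : HomLieColor n gr br eps alpha) (hn : (3 <= n)%N)
    (p : nat) (hp0 : (0 < p)%N) (hpn : (p < n)%N)
    (a : seq V) (ha : size a = p)
    (ha0 : forall i, (i < p)%N -> nth 0 a i \in gr 0)
    (hafix : forall i, (i < p)%N -> alpha (nth 0 a i) = nth 0 a i) :
  HomLieColor (n - p) gr (fun xs => br (a ++ xs)) eps alpha.
Proof.
subst p.
have two_neq0 : (2%:R : K) != 0 by rewrite (pcharf0P K).1.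
case: H => gr_graded [eps_bi [alpha_lin [alpha_deg [br_lin [br_gr [br_skew br_nambu]]]]]].
do 4 split=> //.
split; first exact: prefix_multilinear.
split; first exact: prefix_graded (ltnW hpn) br_gr.
split; first exact: prefix_skew.
exact: prefix_nambu.
Qed.
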